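(* Fix $q\in[0,1)$. Let $\mathcal{X}_q$ be a two-sided infinite Mallows permutation with parameter $q$ and $(r_i)_{i\in\mathbb{Z}}$ its standard record representation. Then $\big(\mathcal{X}_q(r_{i+1})-\max\{\mathcal{X}_q(r_i),0\}\big)_{i\ge0}$ is a sequence of independent $\mathrm{Geom}_+(1-q)$ random variables.
   Context: $\mathrm{Geom}_+(p)$: $\mathbb{P}(G=k)=(1-p)^{k-1}p$ for $k\ge1$. A Mallows permutation on $\mathbb{N}$ with parameter $q$ is $(I_1,I_2,\dots)$ where $(B_{i,j})_{i,j\ge1}$ are independent Bernoulli$(1-q)$ and $I_i=\min\{j\notin\{I_1,\dots,I_{i-1}\}:B_{i,j}=1\}$. Two-sided infinite Mallows permutation: $\Pi_+,\Pi_-$ independent Mallows permutations on $\mathbb{N}$; $(M_i)_{i\ge1}$ independent with $\mathbb{P}(M_i=m)=q^{im}(1-q^i)$; $\Lambda_1\ge\Lambda_2\ge\dots\ge0$ with $|\{j:\Lambda_j=i\}|=M_i$ for $i\ge1$; $\ell_i=i-\Lambda_i$; $k_0>k_{-1}>\dots$ enumerate $\mathbb{Z}\setminus\{\ell_i:i\ge1\}$; $\mathcal{X}_q(\ell_i)=\Pi_+(i)$ and $\mathcal{X}_q(k_i)=1-\Pi_-(1-i)$ for $i\le0$. It is a.s. admissible, i.e. $|\{i\in\mathbb{N}:\mathcal{X}_q(i)\notin\mathbb{N}\}|+|\{i\in\mathbb{Z}\setminus\mathbb{N}:\mathcal{X}_q(i)\in\mathbb{N}\}|<\infty$. A record index of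 $\sigma$ is $r$ with $\sigma(r)>\sigma(k)$ for all $k<r$; for admissible $\sigma$ the record indices are infinite in both directions and the standard record representation is their increasing enumeration $(r_i)_{i\in\mathbb{Z}}$ indexed so that $\sigma(r_0)\le0<\sigma(r_1)$. *)

From HB Require Import structures.
From mathcomp Require Import all_boot all_order all_algebra.
From mathcomp Require Import all_classical all_reals all_analysis.
Set Implicit Arguments. Unset Strict Implicit. Unset Printing Implicit Defensive.
Import Order.TTheory GRing.Theory Num.Theory.
Local Open Scope classical_set_scope.
Local Open Scope ring_scope.

(* least element of a set of naturals (default 0 if there is none) *)
Definition nat_least (S : set nat) : nat :=
  xget 0%N (fun j => S j /\ forall j', S j' -> (j <= j')%N).

(* B i j (i, j >= 1) are the Bernoulli variables; I_i is the least
   j >= 1 not among I_1..I_{i-1} with B i j = true. *)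
Fixpoint mallows_prefix (B : nat -> nat -> bool) (n : nat) : seq nat :=
  match n with
  | 0 => [::]
  | n'.+1 =>
      let p := mallows_prefix B n' in
      rcons p (nat_least [set j | (0 < j)%N /\ j \notin p /\ B n'.+1 j])
  end.

Definition mallows (B : nat -> nat -> bool) (i : nat) : nat :=
  nth 0%N (mallows_prefix B i) i.-1.

Definition lambda_of (M : nat -> nat) : nat -> nat :=
  xget (fun _ => 0%N)
    (fun L : nat -> nat =>
       (forall j, (1 <= j)%N -> (L j.+1 <= L j)%N) /\
       (forall i, (1 <= i)%N ->
          ([set j | (1 <= j)%N /\ L j = i] #= `I_(M i))%card)).

Definition ell_of (M : nat -> nat) (i : nat) : int :=
  (i%:Z - (lambda_of M i)%:Z)%R.

(* k_0 > k_{-1} > ... enumerates Z \ {ell_i : i >= 1}; only the values at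
   indices i <= 0 are meaningful *)
Definition comp_enum (l : nat -> int) : int -> int :=
  xget (fun _ => 0%R)
    (fun k : int -> int =>
       (forall i j : int, j <= 0 -> i < j -> k i < k j) /\
       (forall z : int,
          (~ exists i, (1 <= i)%N /\ l i = z) <-> exists i : int, i <= 0 /\ k i = z)).

Definition two_sided_mallows (Pp Pm : nat -> nat) (M : nat -> nat) : int -> int :=
  let l := ell_of M in
  let k := comp_enum l in
  xget (fun _ => 0%R)
    (fun X : int -> int =>
       (forall i, (1 <= i)%N -> X (l i) = (Pp i)%:Z) /\
       (forall i : int, i <= 0 -> X (k i) = 1 - (Pm (absz (1 - i)))%:Z)).

Definition is_record (s : int -> int) (r : int) : Prop :=
  forall k, k < r -> s k < s r.

Definition record_rep (s : int -> int) : int -> int :=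
  xget (fun _ => 0%R)
    (fun r : int -> int =>
       (forall i j, i < j -> r i < r j) /\
       (forall x, is_record s x <-> exists i, r i = x) /\
       s (r 0) <= 0 /\ 0 < s (r 1)).

Definition record_gap (s : int -> int) (i : nat) : int :=
  let r := record_rep s in
  s (r (i.+1)%:Z) - Num.max (s (r i%:Z)) 0.

Definition geom_pmf (R : realType) (p : R) (k : int) : R :=
  if (0 < k)%R then (1 - p) ^+ (absz k).-1 * p else 0.

(* indices: inl (i,j) ~ B^+_{i,j}, inr (inl (i,j)) ~ B^-_{i,j}, inr (inr i) ~ M_i *)
Definition input_idx := ((nat * nat) + ((nat * nat) + nat))%type.

Definition input_valid (x : input_idx) : bool :=
  match x with
  | inl (i, j) => (0 < i)%N && (0 < j)%N
  | inr (inl (i, j)) => (0 < i)%N && (0 < j)%N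
  | inr (inr i) => (0 < i)%N
  end.

Definition input_val (T : Type) (Bp Bm : nat -> nat -> T -> bool)
  (M : nat -> T -> nat) (x : input_idx) (w : T) : nat :=
  match x with
  | inl (i, j) => nat_of_bool (Bp i j w)
  | inr (inl (i, j)) => nat_of_bool (Bm i j w)
  | inr (inr i) => M i w
  end.

Definition input_law (R : realType) (q : R) (x : input_idx) (v : nat) : R :=
  match x with
  | inl _ | inr (inl _) => if v == 1%N then 1 - q else if v == 0%N then q else 0
  | inr (inr i) => q ^+ (i * v) * (1 - q ^+ i)
  end.

Definition Xq (T : Type) (Bp Bm : nat -> nat -> T -> bool)
  (M : nat -> T -> nat) (w : T) : int -> int :=
  two_sided_mallows (mallows (fun i j => Bp i j w))
                    (mallows (fun i j => Bm i j w)) (fun i => M i w).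

(* Off a null set every row of B^+ and B^- has infinitely many ones, so Pi_+ and Pi_- are
   injections into the positive integers.  The two-sided permutation X is then positive exactly
   at the ell_i, where it equals Pi_+(i), and non-positive elsewhere.  Hence r_1 = ell_1, the
   records of X from r_1 on sit at ell_s for the record times s of Pi_+, and the gaps are the
   increments of Pi_+ along its successive record values (the first one measured from 0).
   Whether the first n+1 increments equal a_0, ..., a_n is decided by reading at most
   |a_0| + ... + |a_n| + 1 values of Pi_+.  Given the values read so far, the next one is v with
   probability q^c (1 - q), c the number of unused values below v.  If m is the current record
   value and c the number of unused values up to m, the next value is at most m with probability
   1 - q^c, and equals m + a_k with probability q^c q^(a_k - 1) (1 - q); every other value ends
   the walk.  Summing, each increment contributes the factor P(Geom_+(1 - q) = a_k). *)

From HB Require Import structures.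
From mathcomp Require Import all_boot all_order all_algebra.
From mathcomp Require Import all_classical all_reals all_analysis.
From mathcomp Require Import zify ring.
Import Order.TTheory GRing.Theory Num.Theory.
Local Open Scope classical_set_scope.
Local Open Scope ring_scope.
Set Implicit Arguments. Unset Strict Implicit.

Lemma nat_leastP (S : set nat) : (exists j, S j) ->
  S (nat_least S) /\ forall j, S j -> (nat_least S <= j)%N.
Proof.
move=> [j Sj]; have ex : exists n, `[< S n >] by exists j; apply/asboolP.
case: (ex_minnP ex) => m /asboolP Sm Hm.
apply: (@xgetPex _ 0%N (fun j => S j /\ forall j', S j' -> (j <= j')%N)).
by exists m; split => // j' /asboolP /Hm.
Qed.

Lemma nat_least_eq (S : set nat) x : S x -> (forall j, S j -> (x <= j)%N) ->
  nat_least S = x.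
Proof.
move=> Sx Hx; apply: xget_unique; first by split.
by move=> y [Sy Hy]; apply/eqP; rewrite eqn_leq Hy // Hx.
Qed.

Lemma nat_least_neq0 (S : set nat) : nat_least S <> 0%N ->
  S (nat_least S) /\ forall j, S j -> (nat_least S <= j)%N.
Proof.
move=> S0; apply: nat_leastP; apply: contrapT => /forallNP noS; apply: S0.
by apply: xgetPN => x [/noS].
Qed.

Section IncreasingFromOne.
Variables (disp : Order.disp_t) (T : orderType disp) (f : nat -> T).
Hypothesis f_incr : forall i j, (0 < i)%N -> (i < j)%N -> (f i < f j)%O.

Lemma incr_le i j : (0 < i)%N -> (i <= j)%N -> (f i <= f j)%O.
Proof. by move=> i0; rewrite leq_eqVlt => /predU1P [->//|/(f_incr i0)/ltW]. Qed.

Lemma incr_lt_rev i j : (0 < j)%N -> (f i < f j)%O -> (i < j)%N.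
Proof. by move=> j0; apply: contraTT; rewrite -!leqNgt -leNgt; apply: incr_le. Qed.

Lemma incr_inj i j : (0 < i)%N -> (0 < j)%N -> f i = f j -> i = j.
Proof.
move=> i0 j0 fij; case: (ltngtP i j) => // ij.
- by move: (f_incr i0 ij); rewrite fij ltxx.
- by move: (f_incr j0 ij); rewrite fij ltxx.
Qed.

End IncreasingFromOne.

(** * Mallows permutations *)

Definition mallows_candidates (B : nat -> nat -> bool) (p : seq nat) (i : nat) :
  set nat := [set j | (0 < j)%N /\ j \notin p /\ B i j].

Definition rows_unbounded (B : nat -> nat -> bool) :=
  forall i, (0 < i)%N -> forall N, exists j, (N < j)%N /\ B i j.

Lemma not_rows_unbounded (B : nat -> nat -> bool) : ~ rows_unbounded B ->
  exists i N, forall j, (N < j)%N -> ~~ B i.+1 j.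
Proof.
move=> B_bnd; apply: contrapT => /forallNP all_unb; apply: B_bnd => -[//|i] _ N.
apply: contrapT => /forallNP no_one; apply: (all_unb i); exists N => j Nj.
by apply/negP => Bij; apply: (no_one j).
Qed.

Section MallowsPermutation.
Variable B : nat -> nat -> bool.

Lemma mallows_prefixS n : mallows_prefix B n.+1 =
  rcons (mallows_prefix B n) (nat_least (mallows_candidates B (mallows_prefix B n) n.+1)).
Proof. by []. Qed.

Lemma size_mallows_prefix n : size (mallows_prefix B n) = n.
Proof. by elim: n => //= n IH; rewrite size_rcons IH. Qed.

Lemma take_mallows_prefix n m : (m <= n)%N ->
  take m (mallows_prefix B n) = mallows_prefix B m.
Proof.
elim: n => [|n IH]; first by rewrite leqn0 => /eqP ->.
rewrite leq_eqVlt => /predU1P [->|]; first by rewrite take_oversize ?size_mallows_prefix.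
rewrite ltnS => mn; rewrite mallows_prefixS -cats1 takel_cat ?size_mallows_prefix //.
exact: IH.
Qed.

Lemma mallowsS n :
  mallows B n.+1 = nat_least (mallows_candidates B (mallows_prefix B n) n.+1).
Proof. by rewrite /mallows mallows_prefixS nth_rcons size_mallows_prefix ltnn eqxx. Qed.

Lemma mallows_prefix_rcons p v :
  mallows_prefix B (size p).+1 = rcons p v <->
  mallows_prefix B (size p) = p /\ mallows B (size p).+1 = v.
Proof.
rewrite mallows_prefixS mallowsS; split => [|[-> ->]] //.
move=> e; have := congr1 (last 0%N) e; have := congr1 (take (size p)) e.
by rewrite !last_rcons -!cats1 take_size_cat ?size_mallows_prefix // take_size_cat // => ->.
Qed.

Lemma mallows_in_prefix n i : (0 < i <= n)%N -> mallows B i \in mallows_prefix B n.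
Proof.
case: i => // i /andP [_ lt_in].
rewrite /mallows -(take_mallows_prefix lt_in) /= nth_take //.
by apply: mem_nth; rewrite size_mallows_prefix.
Qed.

Hypothesis B_unbounded : rows_unbounded B.

(* A row of B has a one beyond every value used so far, so the next value exists. *)
Lemma mallows_fresh n :
  (0 < mallows B n.+1)%N /\ mallows B n.+1 \notin mallows_prefix B n.
Proof.
rewrite mallowsS; set p := mallows_prefix B n.
have [j [jp Bj]] := B_unbounded (ltn0Sn n) (\max_(x <- p) x).
have cand : exists j, mallows_candidates B p n.+1 j.
  exists j; split; first exact: leq_ltn_trans jp.
  split => //; apply/negP => /(@leq_bigmax_seq _ _ xpredT id) /(_ isT) le_jp.
  by move: (leq_ltn_trans le_jp jp); rewrite ltnn.
by have [[? [? _]] _] := nat_leastP cand.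
Qed.

Lemma mallows_gt0 i : (0 < i)%N -> (0 < mallows B i)%N.
Proof. by case: i => // i _; case: (mallows_fresh i). Qed.

Lemma mallows_inj i j : (0 < i)%N -> (0 < j)%N -> mallows B i = mallows B j -> i = j.
Proof.
suff lt_neq k m : (0 < k)%N -> (k < m)%N -> mallows B k <> mallows B m.
  move=> i0 j0 e; case: (ltngtP i j) => // ij.
  - by case: (lt_neq _ _ i0 ij).
  - by case: (lt_neq _ _ j0 ij).
case: m => // m k0 km e; have [_] := mallows_fresh m.
by rewrite -e mallows_in_prefix // k0.
Qed.

End MallowsPermutation.

(** * Increasing enumerations of subsets of Z *)

Definition prev_in (D : set int) (y : int) : int :=
  xget 0 (fun d => D d /\ d < y /\ forall d', D d' -> d' < y -> d' <= d).

Definition next_in (D : set int) (y : int) : int :=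
  xget 0 (fun d => D d /\ y < d /\ forall d', D d' -> y < d' -> d <= d').

Definition unbounded_below (D : set int) := forall y, exists d, D d /\ d < y.
Definition unbounded_above (D : set int) := forall y, exists d, D d /\ y < d.

Section IntEnumerations.
Variable D : set int.

Lemma prev_inP y : (exists d, D d /\ d < y) ->
  D (prev_in D y) /\ prev_in D y < y /\ forall d, D d -> d < y -> d <= prev_in D y.
Proof.
move=> [d [Dd dy]].
have ex : exists n : nat, `[< D (y - 1 - n%:Z) >].
  exists (absz (y - 1 - d)%R); apply/asboolP.
  by have -> : y - 1 - (absz (y - 1 - d)%R)%:Z = d by lia.
case: (ex_minnP ex) => m /asboolP Dm Hm.
rewrite /prev_in; case: xgetP => [x _ //|noP]; exfalso; apply: (noP (y - 1 - m%:Z)).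
split => //; split; first by lia.
move=> d' Dd' d'y; suff : (m <= absz (y - 1 - d')%R)%N by lia.
by apply: Hm; apply/asboolP; have -> : y - 1 - (absz (y - 1 - d')%R)%:Z = d' by lia.
Qed.

Lemma next_inP y : (exists d, D d /\ y < d) ->
  D (next_in D y) /\ y < next_in D y /\ forall d, D d -> y < d -> next_in D y <= d.
Proof.
move=> [d [Dd yd]].
have ex : exists n : nat, `[< D (y + 1 + n%:Z) >].
  exists (absz (d - y - 1)%R); apply/asboolP.
  by have -> : y + 1 + (absz (d - y - 1)%R)%:Z = d by lia.
case: (ex_minnP ex) => m /asboolP Dm Hm.
rewrite /next_in; case: xgetP => [x _ //|noP]; exfalso; apply: (noP (y + 1 + m%:Z)).
split => //; split; first by lia.
move=> d' Dd' yd'; suff : (m <= absz (d' - y - 1)%R)%N by lia.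
by apply: Hm; apply/asboolP; have -> : y + 1 + (absz (d' - y - 1)%R)%:Z = d' by lia.
Qed.

Lemma iter_in (f : int -> int) x : (forall y, D (f y)) -> D x -> forall n, D (iter n f x).
Proof. by move=> Df Dx [|n] //=; rewrite Df. Qed.

Lemma iter_prev_in_onto : unbounded_below D -> forall y z, D y -> D z -> z <= y ->
  exists m, iter m (prev_in D) y = z.
Proof.
move=> Dbelow y z Dy Dz zy.
elim: (absz (y - z)%R).+1 {-2}y (ltnSn (absz (y - z)%R)) Dy zy => // n IH {}y yz Dy zy.
case: (eqVneq z y) => [<-|zy']; first by exists 0%N.
have zlt : z < y by rewrite lt_neqAle zy' zy.
have [Dp [py maxp]] := prev_inP (ex_intro _ z (conj Dz zlt)).
have zp := maxp _ Dz zlt.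
have [m <-] := IH (prev_in D y) ltac:(lia) Dp zp.
by exists m.+1; rewrite iterSr.
Qed.

Lemma iter_next_in_onto : unbounded_above D -> forall y z, D y -> D z -> y <= z ->
  exists m, iter m (next_in D) y = z.
Proof.
move=> Dabove y z Dy Dz yz.
elim: (absz (z - y)%R).+1 {-2}y (ltnSn (absz (z - y)%R)) Dy yz => // n IH {}y zy Dy yz.
case: (eqVneq y z) => [->|yz']; first by exists 0%N.
have ylt : y < z by rewrite lt_neqAle yz' yz.
have [Dn [yn minn]] := next_inP (ex_intro _ z (conj Dz ylt)).
have nz := minn _ Dz ylt.
have [m <-] := IH (next_in D y) ltac:(lia) Dn nz.
by exists m.+1; rewrite iterSr.
Qed.

Lemma enum_bounded_above : unbounded_below D -> (exists Z, forall d, D d -> d < Z) ->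
  exists k : int -> int, (forall i j, j <= 0 -> i < j -> k i < k j) /\
    (forall z, D z <-> exists i, i <= 0 /\ k i = z).
Proof.
move=> Dbelow [Z DZ]; have prevP y := prev_inP (Dbelow y).
have [Dtop [_ maxtop]] := prevP Z.
exists (fun i => iter (absz i) (prev_in D) (prev_in D Z)); split.
  move=> i j j0 ij; have : (absz j < absz i)%N by lia.
  elim: (absz i) => // n IH; rewrite ltnS iterS => jn.
  apply: lt_le_trans (proj1 (proj2 (prevP _))) _.
  by move: jn; rewrite leq_eqVlt => /predU1P [->//|/IH/ltW].
move=> z; split => [Dz|[i [_ <-]]]; last by apply: iter_in => // y; case: (prevP y).
have [m <-] := iter_prev_in_onto Dbelow Dtop Dz (maxtop _ Dz (DZ _ Dz)).
by exists (- m%:Z); split; [lia|rewrite abszN absz_nat].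
Qed.

Lemma enum_unbounded d0 : D d0 -> unbounded_below D -> unbounded_above D ->
  exists r : int -> int, (forall i j, i < j -> r i < r j) /\
    (forall x, D x <-> exists i, r i = x) /\ r 1 = d0.
Proof.
move=> Dd0 Dbelow Dabove.
have prevP y := prev_inP (Dbelow y); have nextP y := next_inP (Dabove y).
pose r i := if 1 <= i then iter (absz (i - 1)%R) (next_in D) d0
            else iter (absz (1 - i)%R) (prev_in D) d0.
have rS i : r i < r (i + 1).
  rewrite /r; case: (lerP 1 i) => i1; case: (lerP 1 (i + 1)) => i1'; try lia.
  - rewrite (_ : absz (i + 1 - 1)%R = (absz (i - 1)%R).+1); last by lia.
    by rewrite iterS; case: (nextP (iter (absz (i - 1)%R) (next_in D) d0)) => _ [].
  - rewrite (_ : i = 0); last by lia.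
    by case: (prevP d0) => _ [].
  - rewrite (_ : absz (1 - i)%R = (absz (1 - (i + 1))%R).+1); last by lia.
    by rewrite iterS; case: (prevP (iter (absz (1 - (i + 1))%R) (prev_in D) d0)) => _ [].
exists r; split.
  move=> i j ij; rewrite (_ : j = i + (absz (j - i - 1)%R).+1%:Z); last by lia.
  elim: (absz (j - i - 1)%R) => [|n IH]; first exact: rS.
  by apply: lt_trans IH _; rewrite (_ : i + n.+2%:Z = i + n.+1%:Z + 1) ?rS //; lia.
split; last by rewrite /r lexx subrr.
move=> x; split => [Dx|[i <-]]; last first.
  by rewrite /r; case: ifP => _; apply: iter_in => // y; [case: (nextP y)|case: (prevP y)].
case: (lerP d0 x) => d0x.
  have [m <-] := iter_next_in_onto Dabove Dd0 Dx d0x.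
  exists (m%:Z + 1); rewrite /r ifT; last by lia.
  by congr iter; lia.
have [[|m] xm] := iter_prev_in_onto Dbelow Dd0 Dx (ltW d0x).
  by move: d0x; rewrite -xm ltxx.
exists (- m%:Z); rewrite /r ifF -?xm; last by lia.
by congr iter; lia.
Qed.

End IntEnumerations.

(** * The two-sided Mallows permutation *)

Lemma lambda_of_nonincr (M : nat -> nat) j : (0 < j)%N ->
  (lambda_of M j.+1 <= lambda_of M j)%N.
Proof.
rewrite /lambda_of; set P := (fun L : nat -> nat => _ /\ _).
case: (pselect (exists L, P L)) => [ex|nex].
  by have [Lnonincr _] := xgetPex (fun _ => 0%N) ex; apply: Lnonincr.
by rewrite xgetPN //= => L PL; apply: nex; exists L.
Qed.

Section TwoSidedMallows.
Variable M : nat -> nat.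
Local Notation L := (lambda_of M).
Local Notation l := (ell_of M).

Lemma lambda_of_le i j : (0 < i)%N -> (i <= j)%N -> (L j <= L i)%N.
Proof.
move=> i1; elim: j => [|j IH]; first by rewrite leqn0 => /eqP j0; rewrite j0 in i1.
rewrite leq_eqVlt => /predU1P [->//|]; rewrite ltnS => ij.
by apply: leq_trans (IH ij); apply: lambda_of_nonincr; exact: leq_trans ij.
Qed.

Lemma ell_of_lt i j : (0 < i)%N -> (i < j)%N -> l i < l j.
Proof. by move=> i0 ij; rewrite /ell_of; have := lambda_of_le i0 (ltnW ij); lia. Qed.

Lemma lambda_of_eventually_const :
  exists I, (0 < I)%N /\ forall j, (I <= j)%N -> L j = L I.
Proof.
suff H v i : (0 < i)%N -> (L i <= v)%N ->
    exists I, (i <= I)%N /\ forall j, (I <= j)%N -> L j = L I.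
  by have [I [i1 Iconst]] := H _ 1%N isT (leqnn _); exists I.
elim: v i => [|v IH] i i1 Liv.
  by exists i; split => // j ij; have := lambda_of_le i1 ij; lia.
case: (pselect (forall j, (i <= j)%N -> L j = L i)) => [|/existsNP [j /not_implyP [ij Lj]]].
  by exists i.
have Llt : (L j < L i)%N by have := lambda_of_le i1 ij; lia.
have [I [jI Iconst]] := IH j (leq_trans i1 ij) ltac:(lia).
by exists I; split => //; exact: leq_trans jI.
Qed.

Definition ell_compl : set int := fun z => ~ exists i, (0 < i)%N /\ l i = z.

Lemma ell_compl_unbounded_below : unbounded_below ell_compl.
Proof.
move=> y; exists (Num.min y (l 1) - 1); split; last first.
  by have := ge_min y y (l 1); rewrite lexx /=; lia.
move=> [i [i1 li]]; have := incr_le ell_of_lt (isT : (0 < 1)%N) i1.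
by rewrite li; have := ge_min (l 1) y (l 1); rewrite lexx orbT; lia.
Qed.

Lemma ell_compl_bounded_above : exists Z, forall d, ell_compl d -> d < Z.
Proof.
have [I [I1 Iconst]] := lambda_of_eventually_const.
exists (l I) => d Cd; rewrite ltNge; apply/negP => Id; apply: Cd.
exists (I + absz (d - l I)%R)%N; split; first lia.
by rewrite /ell_of Iconst ?leq_addr //; rewrite /ell_of in Id; lia.
Qed.

Lemma comp_enumP : let k := comp_enum l in
  (forall i j : int, j <= 0 -> i < j -> k i < k j) /\
  (forall z : int, ell_compl z <-> exists i : int, i <= 0 /\ k i = z).
Proof.
have [k0 k0P] := enum_bounded_above ell_compl_unbounded_below ell_compl_bounded_above.
by rewrite /comp_enum; case: xgetP => [x _ //|/(_ k0) []].
Qed.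

Local Notation k := (comp_enum l).

Lemma comp_enum_neq_ell i j : i <= 0 -> (0 < j)%N -> k i <> l j.
Proof.
move=> i0 j0 e; have [_ /(_ (k i)) [_ compl_ki]] := comp_enumP.
by apply: compl_ki; [exists i|exists j].
Qed.

Lemma comp_enum_inj i j : i <= 0 -> j <= 0 -> k i = k j -> i = j.
Proof.
move=> i0 j0 e; have [kincr _] := comp_enumP.
case: (ltgtP i j) => // ij.
- by move: (kincr _ _ j0 ij); rewrite e ltxx.
- by move: (kincr _ _ i0 ij); rewrite e ltxx.
Qed.

Lemma two_sided_mallowsP (Pp Pm : nat -> nat) : let X := two_sided_mallows Pp Pm M in
  (forall i, (0 < i)%N -> X (l i) = (Pp i)%:Z) /\
  (forall i : int, i <= 0 -> X (k i) = 1 - (Pm (absz (1 - i)%R))%:Z).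
Proof.
rewrite /two_sided_mallows /=; case: xgetP => [x _ //|noX].
pose Q z v := (exists i, (0 < i)%N /\ l i = z /\ v = (Pp i)%:Z) \/
              (exists i : int, i <= 0 /\ k i = z /\ v = 1 - (Pm (absz (1 - i)%R))%:Z).
exfalso; apply: (noX (fun z => xget 0 (Q z))); split => i i_dom; apply: xget_unique.
- by left; exists i.
- move=> v [[j [j1 [e ->]]]|[j [j0 [e _]]]].
    by rewrite (incr_inj ell_of_lt j1 i_dom e).
  by case: (comp_enum_neq_ell j0 i_dom e).
- by right; exists i.
- move=> v [[j [j1 [e _]]]|[j [j0 [e ->]]]].
    by case: (comp_enum_neq_ell i_dom j1 (esym e)).
  by rewrite (comp_enum_inj j0 i_dom e).
Qed.

End TwoSidedMallows.

(** * Records *)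

Lemma inj_bounded_leq (pi : nat -> nat) n b :
  (forall i, (0 < i)%N -> (0 < pi i)%N) ->
  (forall i j, (0 < i)%N -> (0 < j)%N -> pi i = pi j -> i = j) ->
  (forall i, (0 < i <= n)%N -> (pi i <= b)%N) -> (n <= b)%N.
Proof.
move=> pi_gt0 pi_inj pi_le.
have uniq_img : uniq (map pi (iota 1 n)).
  rewrite map_inj_in_uniq ?iota_uniq // => x y; rewrite !mem_iota => /andP [x1 _] /andP [y1 _].
  exact: pi_inj.
have sub_img : {subset map pi (iota 1 n) <= iota 1 b}.
  move=> v /mapP [i]; rewrite mem_iota => /andP [i1 iin] ->.
  by rewrite mem_iota pi_gt0 //= add1n ltnS pi_le // i1 -ltnS -add1n.
by have := uniq_leq_size uniq_img sub_img; rewrite size_map !size_iota.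
Qed.

Definition record_time (pi : nat -> nat) (s : nat) :=
  (0 < s)%N /\ forall j, (0 < j)%N -> (j < s)%N -> (pi j < pi s)%N.

(* The 0-th increment is measured from 0, as max (X r_0) 0 is in record_gap. *)
Definition record_increment (pi tau : nat -> nat) (i : nat) : int :=
  (pi (tau i.+1))%:Z - (if i == 0%N then 0 else (pi (tau i))%:Z).

Section Records.
Variables (l : nat -> int) (k : int -> int) (X : int -> int) (pi pim : nat -> nat).
Hypothesis l_incr : forall i j, (0 < i)%N -> (i < j)%N -> l i < l j.
Hypothesis k_incr : forall i j, j <= 0 -> i < j -> k i < k j.
Hypothesis k_enum : forall z, (~ exists i, (0 < i)%N /\ l i = z) <-> exists i, i <= 0 /\ k i = z.
Hypothesis X_l : forall i, (0 < i)%N -> X (l i) = (pi i)%:Z.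
Hypothesis X_k : forall i, i <= 0 -> X (k i) = 1 - (pim (absz (1 - i)%R))%:Z.
Hypothesis pi_gt0 : forall i, (0 < i)%N -> (0 < pi i)%N.
Hypothesis pi_inj : forall i j, (0 < i)%N -> (0 < j)%N -> pi i = pi j -> i = j.
Hypothesis pim_gt0 : forall i, (0 < i)%N -> (0 < pim i)%N.
Hypothesis pim_inj : forall i j, (0 < i)%N -> (0 < j)%N -> pim i = pim j -> i = j.

Let l_le := incr_le l_incr.

Lemma X_le0 z : (~ exists i, (0 < i)%N /\ l i = z) -> X z <= 0.
Proof.
move=> /k_enum [i [i0 <-]]; rewrite X_k //.
by have := @pim_gt0 (absz (1 - i)%R) ltac:(lia); lia.
Qed.

Lemma lt_ell1_not_ell z : z < l 1 -> ~ exists i, (0 < i)%N /\ l i = z.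
Proof. by move=> zl [i [i0 li]]; have := l_le (isT : (0 < 1)%N) i0; rewrite li leNgt zl. Qed.

Lemma is_record_ell1 : is_record X (l 1).
Proof.
move=> y yl; rewrite X_l //; have := X_le0 (lt_ell1_not_ell yl).
by have := @pi_gt0 1 isT; lia.
Qed.

Lemma is_record_ge_ell1 z : is_record X z -> l 1 <= z -> exists s, record_time pi s /\ l s = z.
Proof.
move=> zrec; rewrite le_eqVlt => /predU1P [<-|lz].
  by exists 1%N; split => //; split => // j j0 j1; move: j0; rewrite leqNgt j1.
have [s [s0 ls]] : exists s, (0 < s)%N /\ l s = z.
  apply: contrapT => /X_le0; have := zrec _ lz; rewrite X_l //.
  by have := @pi_gt0 1 isT; lia.
exists s; split => //; split => // j j0 js.
by have := zrec (l j); rewrite -ls !X_l // => /(_ (l_incr j0 js)); lia.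
Qed.

Lemma record_time_is_record s : record_time pi s -> is_record X (l s).
Proof.
move=> [s0 srec] y; rewrite X_l //.
case: (pselect (exists i, (0 < i)%N /\ l i = y)) => [[j [j0 <-]]|not_l] ys.
  by rewrite X_l //; have := srec j j0 (incr_lt_rev l_incr s0 ys); lia.
by have := X_le0 not_l; have := pi_gt0 s0; lia.
Qed.

(* The first time pi exceeds its maximum over [0, N] is a record time. *)
Lemma record_time_unbounded N : exists s, (N < s)%N /\ record_time pi s.
Proof.
pose mx := \max_(j < N.+1) pi j.
have le_mx j : (j <= N)%N -> (pi j <= mx)%N.
  by move=> jN; apply: (@leq_bigmax _ (fun i : 'I_N.+1 => pi i) (Ordinal (jN : (j < N.+1)%N))).
have ex : exists i, (0 < i)%N && (mx < pi i)%N.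
  apply: contrapT => /forallNP none; suff : (mx.+1 <= mx)%N by rewrite ltnn.
  apply: (inj_bounded_leq pi_gt0 pi_inj) => i /andP [i0 _].
  by rewrite leqNgt; apply/negP => mxi; apply: (none i); rewrite i0.
case: (ex_minnP ex) => s /andP [s0 mxs] s_min.
exists s; split; first by rewrite ltnNge; apply/negP => /le_mx; lia.
split => // j j0 js; case: (leqP j N) => [/le_mx|Nj]; first by lia.
suff : (pi j <= mx)%N by lia.
by rewrite leqNgt; apply/negP => mxj; have := s_min j; rewrite j0 mxj => /(_ isT); lia.
Qed.

Lemma records_unbounded_above : unbounded_above (is_record X).
Proof.
move=> z; have [s [zs stime]] := record_time_unbounded (absz (z - l 1)%R).+1.
exists (l s); split; first exact: record_time_is_record.
suff : l 1 + (s.-1)%:Z <= l s by lia.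
have s0 := proj1 stime; elim: s {zs stime} s0 => // -[|s] IH _; first by rewrite addr0.
by have := IH isT; have := @l_incr s.+1 s.+2 isT (ltnSn _); lia.
Qed.

(* Below l 1 the values are 1 - pim(n); the position where pim is smallest
   among the indices n >= n0 carries a record. *)
Lemma records_unbounded_below : unbounded_below (is_record X).
Proof.
have k_le i j : j <= 0 -> i <= j -> k i <= k j.
  by move=> j0; rewrite le_eqVlt => /predU1P [->//|/(k_incr j0)/ltW].
move=> z; pose y0 := Num.min z (l 1) - 1.
have y0z : y0 < z by have := ge_min z z (l 1); rewrite lexx /= /y0; lia.
have y0l : y0 < l 1 by have := ge_min (l 1) z (l 1); rewrite lexx orbT /y0; lia.
have [i0 [i00 ki0]] := (proj1 (k_enum y0)) (lt_ell1_not_ell y0l).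
pose n0 := absz (1 - i0)%R.
have ex : exists v, `[< exists n, (n0 <= n)%N /\ pim n = v >].
  by exists (pim n0); apply/asboolP; exists n0.
case: (ex_minnP ex) => v /asboolP [ns [n0ns pimns]] v_min.
have kns_y0 : k (1 - ns%:Z) <= y0 by rewrite -ki0; apply: k_le; lia.
exists (k (1 - ns%:Z)); split; last by lia.
move=> y ys; have [i [i_0 ki]] := (proj1 (k_enum y)) (@lt_ell1_not_ell y ltac:(lia)).
rewrite -ki in ys *.
have ins : i < 1 - ns%:Z.
  by rewrite ltNge; apply/negP => nsi; have := k_le _ _ i_0 nsi; rewrite leNgt ys.
rewrite !X_k //; last by lia.
rewrite (_ : absz (1 - (1 - ns%:Z))%R = ns); last by lia.
have : (v <= pim (absz (1 - i)%R))%N.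
  by apply: v_min; apply/asboolP; exists (absz (1 - i)%R); split => //; lia.
have : pim (absz (1 - i)%R) <> pim ns by move/pim_inj => /(_ ltac:(lia) ltac:(lia)); lia.
lia.
Qed.

Lemma record_repP : let r := record_rep X in
  (forall i j, i < j -> r i < r j) /\
  (forall x, is_record X x <-> exists i, r i = x) /\
  X (r 0) <= 0 /\ 0 < X (r 1).
Proof.
have [r [r_incr [r_onto r1]]] :=
  enum_unbounded is_record_ell1 records_unbounded_below records_unbounded_above.
rewrite /record_rep; case: xgetP => [x _ //|/(_ r) []].
split => //; split => //; split.
  by apply/X_le0/lt_ell1_not_ell; rewrite -r1; exact: r_incr.
by rewrite r1 X_l //; have := @pi_gt0 1 isT; lia.
Qed.

Local Notation r := (record_rep X).

Let r_le : {mono r : i j / i <= j}.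
Proof. by apply: le_mono; have [] := record_repP. Qed.

Let r_lt : {mono r : i j / i < j}.
Proof. exact: leW_mono. Qed.

Lemma record_rep1 : r 1 = l 1.
Proof.
have [_ [r_onto [X0 _]]] := record_repP.
have [j rj] := (proj1 (r_onto (l 1))) is_record_ell1.
case: (ltgtP j 1) => j1; last by rewrite -j1.
- have : X (r j) <= X (r 0).
    have : r j <= r 0 by rewrite r_le; lia.
    rewrite le_eqVlt => /predU1P [->//|/((proj2 (r_onto (r 0))) (ex_intro _ 0 erefl))/ltW//].
  by rewrite rj X_l //; have := @pi_gt0 1 isT; lia.
- have := r_lt 1 j; rewrite j1 rj => /lt_ell1_not_ell /X_le0.
  have [_ [_ [_ Xr1]]] := record_repP; lia.
Qed.

(* The s with l s = r_i: for i >= 1 it is the i-th record time of pi. *)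
Definition record_index (i : nat) : nat :=
  xget 0%N (fun s => (0 < s)%N /\ l s = r i%:Z).

Lemma record_indexP i : (0 < i)%N -> record_time pi (record_index i) /\ l (record_index i) = r i%:Z.
Proof.
move=> i0; have [r_onto _] := (proj2 record_repP).
have [s [srec ls]] : exists s, record_time pi s /\ l s = r i%:Z.
  apply: is_record_ge_ell1; first by apply/r_onto; exists i%:Z.
  by rewrite -record_rep1 r_le; lia.
rewrite /record_index; case: xgetP => [x _ [x0 lx]|/(_ s) []]; last by split => //; case: srec.
by split => //; rewrite (incr_inj l_incr x0 (proj1 srec) (etrans lx (esym ls))).
Qed.

Lemma record_index1 : record_index 1 = 1%N.
Proof.
have [[i0 _] li] := @record_indexP 1 isT.
by apply: (incr_inj l_incr) => //; rewrite li record_rep1.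
Qed.

Lemma record_index_lt i j : (0 < i)%N -> (i < j)%N -> (record_index i < record_index j)%N.
Proof.
move=> i0 ij; have [[si _] li] := record_indexP i0.
have [[sj _] lj] := record_indexP (leq_trans i0 (ltnW ij)).
by apply: (incr_lt_rev l_incr sj); rewrite li lj r_lt; lia.
Qed.

Lemma record_index_onto s : record_time pi s -> exists i, (0 < i)%N /\ record_index i = s.
Proof.
move=> srec; have [r_onto _] := (proj2 record_repP).
have [j rj] := (proj1 (r_onto (l s))) (record_time_is_record srec).
have j1 : 1 <= j.
  rewrite leNgt; apply/negP => j1; have := r_lt j 1; rewrite j1 rj record_rep1.
  by have := l_le (isT : (0 < 1)%N) (proj1 srec); rewrite leNgt => /negbTE ->.
exists (absz j); split; first lia.
have [[i0 _] li] := @record_indexP (absz j) ltac:(lia).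
apply: (incr_inj l_incr) => //; first by case: srec.
by rewrite li -rj; congr r; lia.
Qed.

Lemma record_gapE i : record_gap X i = record_increment pi record_index i.
Proof.
have [[Si0 _] lSi] := @record_indexP i.+1 isT.
rewrite /record_gap /record_increment -lSi X_l //; congr (_ - _).
case: i lSi Si0 => [|i] _ _ /=; first by have [_ [_ [X0 _]]] := record_repP; apply/max_idPr.
have [[i0 _] li] := @record_indexP i.+1 isT.
by rewrite -li X_l //; apply/max_idPl; have := pi_gt0 i0; lia.
Qed.

Lemma record_index_enum :
  [/\ forall i, (0 < i)%N -> record_time pi (record_index i),
      record_index 1 = 1%N,
      forall i j, (0 < i)%N -> (i < j)%N -> (record_index i < record_index j)%N,
      forall s, record_time pi s -> exists i, (0 < i)%N /\ record_index i = s
    & forall i, record_gap X i = record_increment pi record_index i].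
Proof.
split; [by move=> i /record_indexP []|exact: record_index1|exact: record_index_lt|
  exact: record_index_onto|exact: record_gapE].
Qed.

End Records.

(** * Reading the record increments off a prefix *)

(* Having read pi 1, ..., pi t, with current maximum m and the increments
   a 0, ..., a (k - 1) already confirmed, read at most [fuel] further values and
   check the increments a k, ..., a n.  A value 0 (the junk value of nat_least
   on a row without free ones) makes the walk fail. *)
Fixpoint record_walk (pi : nat -> nat) (a : nat -> int) (n fuel t m k : nat)
    {struct fuel} : bool :=
  if (n < k)%N then true else
  if fuel is fuel'.+1 then
    let v := pi t.+1 in
    (v != 0%N) &&
    (if (v <= m)%N then record_walk pi a n fuel' t.+1 m k
     else (v%:Z == m%:Z + a k) && record_walk pi a n fuel' t.+1 v k.+1)
  else false.

Definition gap_budget (a : nat -> int) (n : nat) : nat := (\sum_(i < n.+1) absz (a i))%N.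

Section RecordWalk.
Variables (pi tau : nat -> nat) (a : nat -> int) (n : nat).
Hypothesis pi_gt0 : forall i, (0 < i)%N -> (0 < pi i)%N.
Hypothesis pi_inj : forall i j, (0 < i)%N -> (0 < j)%N -> pi i = pi j -> i = j.
Hypothesis tau_record : forall i, (0 < i)%N -> record_time pi (tau i).
Hypothesis tau1 : tau 1 = 1%N.
Hypothesis tau_incr : forall i j, (0 < i)%N -> (i < j)%N -> (tau i < tau j)%N.
Hypothesis tau_onto : forall s, record_time pi s -> exists i, (0 < i)%N /\ tau i = s.

Let tau_le i j : (0 < i)%N -> (i <= j)%N -> (tau i <= tau j)%N :=
  @incr_le _ nat tau tau_incr i j.

Lemma tau_gt0 i : (0 < i)%N -> (0 < tau i)%N.
Proof. by move=> /tau_record []. Qed.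

Lemma le_record_value k j : (0 < k)%N -> (0 < j)%N -> (j < tau k.+1)%N ->
  (pi j <= pi (tau k))%N.
Proof.
move=> k0; elim: j {-2}j (leqnn j) => [|N IH] j jN j0 jk; first by move: j0; lia.
case: (pselect (record_time pi j)) => [jrec|not_rec].
  have [i [i0 ij]] := tau_onto jrec; rewrite -ij in jk *.
  have ik : (i < k.+1)%N by exact: (@incr_lt_rev _ nat tau tau_incr i k.+1 isT jk).
  case: (ltngtP i k) => [{}ik|//|->//]; last by move: ik; lia.
  by apply: ltnW; have [_] := tau_record k0; apply; [exact: tau_gt0|exact: tau_incr].
have [j' [j'0 [j'j le_j]]] : exists j', (0 < j')%N /\ (j' < j)%N /\ (pi j <= pi j')%N.
  apply: contrapT => none; apply: not_rec; split => // j' j'0 j'j.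
  by rewrite ltnNge; apply/negP => le_j; apply: none; exists j'.
by apply: leq_trans le_j _; apply: IH => //; [lia|exact: ltn_trans j'j jk].
Qed.

Definition walk_state (t m k : nat) :=
  (k = 0%N /\ t = 0%N /\ m = 0%N) \/
  [/\ (0 < k)%N, (tau k <= t)%N, (t < tau k.+1)%N & m = pi (tau k)].

Lemma walk_state_lt t m k : walk_state t m k -> (t < tau k.+1)%N.
Proof. by case=> [[-> [-> _]]|[]]; rewrite ?tau1. Qed.

Lemma walk_state_skip t m k : walk_state t m k -> (t.+1 < tau k.+1)%N ->
  (pi t.+1 <= m)%N /\ walk_state t.+1 m k.
Proof.
case=> [[-> [-> _]]|[k0 kt tk ->]]; first by rewrite tau1.
by split; [exact: le_record_value|right; split => //; exact: leqW].
Qed.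

Lemma walk_state_record t m k : walk_state t m k -> t.+1 = tau k.+1 ->
  [/\ (m < pi t.+1)%N, walk_state t.+1 (pi t.+1) k.+1
    & record_increment pi tau k = (pi t.+1)%:Z - m%:Z].
Proof.
move=> st e; have st' : walk_state t.+1 (pi t.+1) k.+1.
  by right; split; rewrite ?e //; exact: tau_incr.
case: st => [[k0 [t0 m0]]|[k0 _ _ ->]].
  by subst; split; rewrite // ?pi_gt0 // /record_increment -e subr0.
split => //; last by rewrite /record_increment -e; case: k k0 {e st'}.
by rewrite e; have [_] := @tau_record k.+1 isT; apply; [exact: tau_gt0|exact: tau_incr].
Qed.

Lemma record_walkP fuel t m k : walk_state t m k -> (k <= n.+1)%N ->
  record_walk pi a n fuel t m k <->
  (forall i, (k <= i <= n)%N -> record_increment pi tau i = a i) /\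
  ((n < k)%N \/ (tau n.+1 <= fuel + t)%N).
Proof.
elim: fuel t m k => [|fuel IH] t m k st kn /=; case: ifP => nk.
- by split => // _; split; [lia|left].
- split => // [[_ [//|]]].
  by have := walk_state_lt st; have := tau_le (isT : (0 < k.+1)%N) (_ : (k.+1 <= n.+1)%N); lia.
- by split => // _; split; [lia|left].
rewrite lt0n_neq0 ?pi_gt0 //=.
have := walk_state_lt st; rewrite leq_eqVlt => /predU1P [e|lt_t].
  have [mv st' incr_k] := walk_state_record st e.
  rewrite leqNgt mv /=; have IH' := IH _ _ _ st' ltac:(lia); split.
    move=> /andP [/eqP eq_v /IH' [incr_eq fuel_ok]]; split.
      move=> i /andP [ki ni]; case: (ltngtP k i) => [ki'|ik|<-]; first by apply: incr_eq; lia.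
        by lia.
      by rewrite incr_k eq_v; lia.
    right; case: fuel_ok => [nk'|]; last by lia.
    have ekn : k = n by lia.
    by rewrite -ekn -e; lia.
  move=> [incr_eq fuel_ok]; apply/andP; split.
    by apply/eqP; rewrite -(incr_eq k ltac:(lia)) incr_k; lia.
  by apply/IH'; split; [move=> i ki; apply: incr_eq; lia|case: fuel_ok; [lia|right; lia]].
have [vm st'] := walk_state_skip st lt_t.
rewrite vm (IH _ _ _ st' kn).
by split => [[eq_a [|fuel_ok]]|[eq_a [|fuel_ok]]]; split => //; (by left) || (right; lia).
Qed.

Lemma record_increment_sum k : (pi (tau k.+1))%:Z = \sum_(i < k.+1) record_increment pi tau i.
Proof.
elim: k => [|k IH]; first by rewrite big_ord1 /record_increment /= subr0.
by rewrite big_ord_recr /= -IH /record_increment /=; lia.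
Qed.

Lemma record_time_le_value s : record_time pi s -> (s <= pi s)%N.
Proof.
move=> [s0 srec]; apply: (inj_bounded_leq pi_gt0 pi_inj) => j /andP [j0 js].
by case: (ltngtP j s) js => // [/(srec _ j0)/ltnW|->].
Qed.

(* The (n+1)-th record time is at most the (n+1)-th record value, which is
   a 0 + ... + a n: that much fuel suffices. *)
Lemma record_walk_correct : record_walk pi a n (gap_budget a n).+1 0 0 0 <->
  forall i, (i <= n)%N -> record_increment pi tau i = a i.
Proof.
rewrite (record_walkP (gap_budget a n).+1 (or_introl (conj erefl (conj erefl erefl))) isT).
split => [[eq_a _] i ni|eq_a]; first by apply: eq_a.
split; first by move=> i /andP [_]; apply: eq_a.
right; rewrite addn0.
have value_le : (pi (tau n.+1))%:Z <= (gap_budget a n)%:Z.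
  rewrite record_increment_sum /gap_budget.
  elim/big_ind2: _ => // [x1 x2 y1 y2 le1 le2|i _]; first by rewrite PoszD; apply: lerD.
  by rewrite eq_a -1?ltnS //; lia.
by have := record_time_le_value (tau_record (isT : (0 < n.+1)%N)); lia.
Qed.

End RecordWalk.

Lemma record_walk_record_gap (Bp Bm : nat -> nat -> bool) (M : nat -> nat) (a : nat -> int) n :
  rows_unbounded Bp -> rows_unbounded Bm ->
  record_walk (mallows Bp) a n (gap_budget a n).+1 0 0 0 <->
  forall i, (i <= n)%N -> record_gap (two_sided_mallows (mallows Bp) (mallows Bm) M) i = a i.
Proof.
move=> Bp_unb Bm_unb.
have [k_incr k_enum] := comp_enumP M.
have [X_l X_k] := two_sided_mallowsP M (mallows Bp) (mallows Bm).
have [idx_rec idx1 idx_incr idx_onto gapE] := record_index_enum (@ell_of_lt M) k_incr k_enum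
  X_l X_k (mallows_gt0 Bp_unb) (mallows_inj Bp_unb) (mallows_gt0 Bm_unb) (mallows_inj Bm_unb).
rewrite (record_walk_correct _ _ (mallows_gt0 Bp_unb) (mallows_inj Bp_unb)
  idx_rec idx1 idx_incr idx_onto).
by split => eq_a i /eq_a; rewrite gapE.
Qed.

(** * Probabilities *)

Lemma prodr_const_count (R : pzSemiRingType) (I : Type) (s : seq I) (P : pred I) (c : R) :
  \prod_(j <- s | P j) c = c ^+ count P s.
Proof.
elim: s => [|x s IH]; first by rewrite big_nil.
by rewrite big_cons /=; case: (P x); rewrite IH ?exprS.
Qed.

Lemma le_expr_eq0 (R : realType) (q x : R) : 0 <= q -> q < 1 -> 0 <= x ->
  (forall K : nat, x <= q ^+ K) -> x = 0.
Proof.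
move=> q0 q1 x0 le_x; apply/eqP; rewrite eq_le x0 andbT leNgt; apply/negP => x_gt0.
have q_cvg : (fun K : nat => q ^+ K) @ \oo --> 0 by apply: cvg_expr; rewrite ger0_norm.
have [N _ qN] := cvgr0_norm_lt (fun K : nat => q ^+ K) q_cvg x x_gt0.
by have := qN N (leqnn N); rewrite /= ger0_norm ?exprn_ge0 // ltNge le_x.
Qed.

(* The next Mallows value is x when the row has zeros at the free_below p x
   unused columns below x and a one at x. *)
Definition free_below (p : seq nat) (x : nat) : nat :=
  count (fun j => j \notin p) (iota 1 x.-1).

Lemma free_belowS p x : free_below p x.+2 = (free_below p x.+1 + (x.+1 \notin p))%N.
Proof. by rewrite /free_below -[in LHS](addn1 x) iotaD count_cat /= add1n addn0. Qed.

Lemma free_below_above p m A : all (fun x => x <= m)%N p ->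
  free_below p (m.+1 + A) = (free_below p m.+1 + A)%N.
Proof.
move=> p_le; elim: A => [|A IH]; first by rewrite !addn0.
rewrite addnS addSn free_belowS -addSn IH -addnA; congr (_ + _)%N.
suff -> : (m + A).+1 \notin p by rewrite addn1.
by apply/negP => /(allP p_le); rewrite ltnNge leq_addr.
Qed.

Section PrefixProbability.
Variables (R : realType) (d : measure_display) (T : measurableType d).
Variable (P : probability T R).
Variable q : R.
Variables (Bp Bm : nat -> nat -> T -> bool) (M : nat -> T -> nat).
Hypothesis Hmeas : forall (x : input_idx) (v : nat), input_valid x ->
  measurable [set w | input_val Bp Bm M x w = v].
Hypothesis Hind : forall (s : seq input_idx) (v : input_idx -> nat),
  uniq s -> all input_valid s ->
  P (\big[setI/setT]_(x <- s) [set w | input_val Bp Bm M x w = v x])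
    = (\prod_(x <- s) input_law q x (v x))%:E.

Definition cylinder (s : seq input_idx) (v : input_idx -> nat) : set T :=
  \big[setI/setT]_(x <- s) [set w | input_val Bp Bm M x w = v x].

Lemma cylinder_measurable s v : all input_valid s -> measurable (cylinder s v).
Proof.
elim: s => [|x s IH] /=; first by rewrite /cylinder big_nil.
move=> /andP [x_ok s_ok]; rewrite /cylinder big_cons.
by apply: measurableI; [exact: Hmeas|exact: IH].
Qed.

Lemma in_cylinder s v w :
  cylinder s v w <-> forall x, x \in s -> input_val Bp Bm M x w = v x.
Proof.
elim: s => [|x s IH]; first by rewrite /cylinder big_nil.
rewrite /cylinder big_cons; split.
  by move=> [wx /IH ws] y; rewrite in_cons => /predU1P [->|/ws].
move=> ws; split; first by apply: ws; rewrite mem_head.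
by apply/IH => y ys; apply: ws; rewrite in_cons ys orbT.
Qed.

Local Notation Bw w := (fun i j => Bp i j w).

Definition prefix_event (p : seq nat) : set T :=
  [set w | mallows_prefix (Bw w) (size p) = p].

(* The Bernoulli variables that decide whether the next Mallows value is x. *)
Definition row_slots (p : seq nat) (x : nat) : seq input_idx :=
  [seq (inl ((size p).+1, j) : input_idx) | j <- [seq j <- iota 1 x | j \notin p]].

Definition row_values (p : seq nat) (x : nat) (v : input_idx -> nat) : input_idx -> nat :=
  fun y => if y is inl (i, j) then
             if i == (size p).+1 then nat_of_bool (j == x) else v y
           else v y.

Definition rows_le (t : nat) (s : seq input_idx) :=
  all (fun y => if y is inl (i, _) then (0 < i <= t)%N else false) s.

Definition prefix_cylinder p s v :=
  [/\ uniq s, all input_valid s, rows_le (size p) s & prefix_event p = cylinder s v].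

Lemma rows_le_row_values p x v y s : rows_le (size p) s -> y \in s -> row_values p x v y = v y.
Proof.
move=> /allP /[apply]; case: y => // [[i j]] /andP [_ ip].
by rewrite /= (ltn_eqF (leq_ltn_trans ip (ltnSn _))).
Qed.

Lemma prefix_event_rcons p x : prefix_event (rcons p x) =
  prefix_event p `&` [set w | nat_least (mallows_candidates (Bw w) p (size p).+1) = x].
Proof.
apply/seteqP; split => w; rewrite /prefix_event /= size_rcons.
  by move=> /mallows_prefix_rcons [wp]; rewrite mallowsS wp.
by move=> [wp wx]; apply/mallows_prefix_rcons; rewrite mallowsS wp.
Qed.

Lemma next_value_cylinder p x w : (0 < x)%N -> x \notin p ->
  nat_least (mallows_candidates (Bw w) p (size p).+1) = x <->
  cylinder (row_slots p x) (row_values p x (fun _ => 0%N)) w.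
Proof.
move=> x0 xp; have slotP j : (inl ((size p).+1, j) : input_idx) \in row_slots p x <->
    (0 < j <= x)%N /\ j \notin p.
  rewrite mem_map; last by move=> ? ? [].
  by rewrite mem_filter mem_iota; split => [/andP [-> ?]|[? ->]]; [split => //; lia|lia].
rewrite in_cylinder; split.
  move=> e y /mapP [j]; rewrite mem_filter mem_iota => /andP [jp /andP [j1 jx]] -> /=.
  have : nat_least (mallows_candidates (Bw w) p (size p).+1) <> 0%N by rewrite e; lia.
  move=> /nat_least_neq0; rewrite e => -[[_ [_ Bx]] x_min]; rewrite eqxx.
  case: (eqVneq j x) => [->|jx']; first by rewrite Bx.
  case Bj : (Bp (size p).+1 j w) => //=.
  by have := x_min j (conj j1 (conj jp Bj)); lia.
move=> ws; apply: nat_least_eq.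
  split => //; split => //.
  have xx : (0 < x <= x)%N by rewrite x0 leqnn.
  by have := ws _ (proj2 (slotP x) (conj xx xp)); rewrite /= !eqxx; case: (Bp _ _ w).
move=> j [j1 [jp Bj]]; rewrite leqNgt; apply/negP => jx.
have jx' : (0 < j <= x)%N by rewrite j1 ltnW.
have := ws _ (proj2 (slotP j) (conj jx' jp)).
by rewrite /= eqxx (ltn_eqF jx) Bj.
Qed.

Lemma prefix_cylinder_rcons p x s v : (0 < x)%N -> x \notin p -> prefix_cylinder p s v ->
  prefix_cylinder (rcons p x) (s ++ row_slots p x) (row_values p x v).
Proof.
move=> x0 xp [s_uniq s_ok s_rows ps].
have slot_rows : rows_le (size p).+1 (row_slots p x).
  by apply/allP => y /mapP [j _ ->] /=; rewrite leqnn.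
split.
- rewrite cat_uniq s_uniq /=; apply/andP; split.
    by apply/hasPn => y /mapP [j _ ->]; apply/negP => /(allP s_rows) /=; lia.
  by rewrite map_inj_uniq ?filter_uniq ?iota_uniq // => ? ? [].
- rewrite all_cat s_ok; apply/allP => y /mapP [j].
  by rewrite mem_filter mem_iota => /andP [_ /andP [j1 _]] ->; rewrite /= j1.
- rewrite size_rcons /rows_le all_cat; apply/andP; split; last exact: slot_rows.
  by apply: sub_all s_rows => -[[i j] /andP [-> /leqW]|].
rewrite prefix_event_rcons ps; apply/seteqP; split => w.
  move=> [/in_cylinder ws /(next_value_cylinder w x0 xp) /in_cylinder wx].
  apply/in_cylinder => y; rewrite mem_cat => /orP [ys|yx].
    by rewrite (@rows_le_row_values p x v y s) // ws.
  by rewrite wx //; move: yx => /mapP [j _ ->] /=; rewrite eqxx.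
move=> /in_cylinder wsx; split.
  by apply/in_cylinder => y ys; rewrite wsx ?mem_cat ?ys // (@rows_le_row_values p x v y s).
apply/(next_value_cylinder w x0 xp)/in_cylinder => y yx.
by rewrite wsx ?mem_cat ?yx ?orbT //; move: yx => /mapP [j _ ->] /=; rewrite eqxx.
Qed.

Lemma prefix_cylinder_exists p : uniq p -> all (fun x => 0 < x)%N p ->
  exists s v, prefix_cylinder p s v.
Proof.
elim/last_ind: p => [|p x IH].
  by exists [::], (fun _ => 0%N); split => //; rewrite /cylinder big_nil; apply/seteqP.
rewrite rcons_uniq all_rcons => /andP [xp p_uniq] /andP [x0 p_pos].
have [s [v ps]] := IH p_uniq p_pos.
by exists (s ++ row_slots p x), (row_values p x v); apply: prefix_cylinder_rcons.
Qed.

Lemma prefix_event_measurable p : uniq p -> all (fun x => 0 < x)%N p ->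
  measurable (prefix_event p).
Proof.
by move=> p_uniq p_pos; have [s [v [_ s_ok _ ->]]] := prefix_cylinder_exists p_uniq p_pos;
  exact: cylinder_measurable.
Qed.

Lemma row_law p x v : (0 < x)%N -> x \notin p ->
  \prod_(y <- row_slots p x) input_law q y (row_values p x v y) = q ^+ free_below p x * (1 - q).
Proof.
move=> x0 xp; rewrite /row_slots big_map big_filter /=.
rewrite (_ : iota 1 x = rcons (iota 1 x.-1) x); last first.
  by case: x x0 {xp} => // x _; rewrite -cats1 -[in LHS](addn1 x) iotaD add1n.
rewrite -cats1 big_cat /= big_cons big_nil /= xp !eqxx mulr1 /free_below -prodr_const_count.
congr (_ * _); rewrite [LHS]big_seq_cond [RHS]big_seq_cond; apply: eq_bigr => j /andP [+ _].
by rewrite mem_iota => j_lt; rewrite (_ : (j == x) = false) //; apply/negbTE; lia.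
Qed.

Lemma prefix_event_rcons_prob p x : uniq p -> all (fun x => 0 < x)%N p -> (0 < x)%N -> x \notin p ->
  P (prefix_event (rcons p x)) = (P (prefix_event p) * (q ^+ free_below p x * (1 - q))%:E)%E.
Proof.
move=> p_uniq p_pos x0 xp.
have [s [v ps]] := prefix_cylinder_exists p_uniq p_pos.
have [s_uniq s_ok s_rows ->] := ps.
have [sx_uniq sx_ok _ ->] := prefix_cylinder_rcons x0 xp ps.
rewrite /cylinder !Hind // big_cat /= row_law // -EFinM; congr EFin; congr (_ * _).
by rewrite big_seq [RHS]big_seq; apply: eq_bigr => y ys; rewrite (@rows_le_row_values p x v y s).
Qed.

Lemma prefix_event_nil : P (prefix_event [::]) = 1%E.
Proof. by rewrite (_ : prefix_event [::] = setT) ?probability_setT //; apply/seteqP. Qed.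

Variables (a : nat -> int) (n : nat).

Definition walk_event fuel p m k : set T :=
  [set w | mallows_prefix (Bw w) (size p) = p /\
           record_walk (mallows (Bw w)) a n fuel (size p) m k].

Definition walk_step_event fuel p m k v : set T :=
  if (0 < v)%N && (v \notin p) then
    if (v <= m)%N then walk_event fuel (rcons p v) m k
    else if v%:Z == m%:Z + a k then walk_event fuel (rcons p v) v k.+1 else set0
  else set0.

Lemma walk_event_rcons fuel p v m k w : walk_event fuel (rcons p v) m k w <->
  [/\ mallows_prefix (Bw w) (size p) = p, mallows (Bw w) (size p).+1 = v
    & record_walk (mallows (Bw w)) a n fuel (size p).+1 m k].
Proof.
rewrite /walk_event /= size_rcons mallows_prefix_rcons.
by split => [[[? ?] ?]|[? ? ?]].
Qed.

Lemma walk_eventS fuel p m k w : (k <= n)%N ->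
  walk_event fuel.+1 p m k w <-> exists v, walk_step_event fuel p m k v w.
Proof.
move=> kn; rewrite /walk_event /= ifF; last by apply/negbTE; rewrite -leqNgt.
split => [[wp /andP [v0 wv]]|[v]].
  set v := mallows (Bw w) (size p).+1 in v0 wv.
  have vE : v = nat_least (mallows_candidates (Bw w) p (size p).+1) by rewrite /v mallowsS wp.
  move: v0; rewrite vE => /eqP /nat_least_neq0 [[v_gt0 [vp _]] _]; rewrite -vE in v_gt0 vp.
  exists v; rewrite /walk_step_event v_gt0 vp /=.
  case: ifP wv => _ wv; first exact/walk_event_rcons.
  by case/andP: wv => -> wv; apply/walk_event_rcons.
rewrite /walk_step_event; case: ifP => [/andP [v_gt0 vp]|//].
have v0 : (v != 0)%N by rewrite -lt0n.
case: ifP => vm; first by move=> /walk_event_rcons [-> -> ?]; rewrite v0 vm.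
by case: ifP => // /eqP vmk /walk_event_rcons [-> -> ?]; rewrite v0 vm vmk eqxx.
Qed.

Lemma walk_step_event_out fuel p m k v : (m + absz (a k) < v)%N ->
  walk_step_event fuel p m k v = set0.
Proof.
move=> mv; rewrite /walk_step_event; case: ifP => // _.
by rewrite !ifF //; apply/negbTE; lia.
Qed.

Lemma walk_event_step fuel p m k : (k <= n)%N ->
  walk_event fuel.+1 p m k =
  \big[setU/set0]_(v < (m + absz (a k)).+1) walk_step_event fuel p m k v.
Proof.
move=> kn; rewrite -bigcup_mkord; apply/seteqP; split => w.
  move=> /(walk_eventS _ _ _ _ kn) [v wv]; exists v => //=.
  by rewrite ltnS leqNgt; apply/negP => /walk_step_event_out mv; rewrite mv in wv.
by move=> [v _ wv]; apply/(walk_eventS _ _ _ _ kn); exists v.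
Qed.

Lemma walk_event_done fuel p m k : (n < k)%N -> walk_event fuel p m k = prefix_event p.
Proof.
move=> nk; apply/seteqP; split => w; first by case.
by move=> wp; split => //; case: fuel => /=; rewrite nk.
Qed.

Lemma walk_event0 p m k : (k <= n)%N -> walk_event 0 p m k = set0.
Proof. by move=> kn; apply/seteqP; split => // w [_] /=; rewrite ifF //; apply/negbTE; lia. Qed.

Lemma walk_step_event_disj fuel p m k u v : u != v ->
  walk_step_event fuel p m k u `&` walk_step_event fuel p m k v = set0.
Proof.
have sub x : walk_step_event fuel p m k x `<=`
    [set w | mallows_prefix (Bw w) (size p).+1 = rcons p x].
  rewrite /walk_step_event => w; case: ifP => // _.
  by case: ifP => _; [|case: ifP => // _] => -[]; rewrite size_rcons.
move=> uv; apply/seteqP; split => // w [/sub wu /sub wv]; move: uv.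
by have := congr1 (last 0%N) (etrans (esym wu) wv); rewrite !last_rcons => ->; rewrite eqxx.
Qed.

Lemma walk_step_event_measurable fuel p m k v : uniq p -> all (fun x => 0 < x)%N p ->
  (forall p' m' k', uniq p' -> all (fun x => 0 < x)%N p' ->
    measurable (walk_event fuel p' m' k')) ->
  measurable (walk_step_event fuel p m k v).
Proof.
move=> p_uniq p_pos walk_meas; rewrite /walk_step_event; case: ifP => // /andP [v_gt0 vp].
have pv_uniq : uniq (rcons p v) by rewrite rcons_uniq vp p_uniq.
have pv_pos : all (fun x => 0 < x)%N (rcons p v) by rewrite all_rcons v_gt0 p_pos.
by case: ifP => _; [|case: ifP => _ //]; exact: walk_meas.
Qed.

Lemma walk_event_measurable fuel p m k : uniq p -> all (fun x => 0 < x)%N p ->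
  measurable (walk_event fuel p m k).
Proof.
elim: fuel p m k => [|fuel IH] p m k p_uniq p_pos;
  case: (ltnP n k) => nk; try by rewrite walk_event_done //; exact: prefix_event_measurable.
  by rewrite walk_event0.
rewrite walk_event_step //; apply: bigsetU_measurable => v _.
exact: walk_step_event_measurable.
Qed.

Definition gap_prob k := \prod_(k <= l < n.+1) geom_pmf (1 - q) (a l).

Lemma gap_probS k : (k <= n)%N -> gap_prob k = geom_pmf (1 - q) (a k) * gap_prob k.+1.
Proof. by move=> kn; rewrite /gap_prob big_ltn. Qed.

Lemma sum_free_below p m :
  \sum_(0 <= v < m.+1) (if (0 < v)%N && (v \notin p) then q ^+ free_below p v * (1 - q) else 0)
  = 1 - q ^+ free_below p m.+1.
Proof.
elim: m => [|m IH]; first by rewrite big_nat1 /free_below /= subrr.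
rewrite big_nat_recr // IH free_belowS /=.
by case: (m.+1 \in p) => /=; rewrite ?addn0 ?addr0 ?addn1 ?exprS //; ring.
Qed.

Definition step_prob p m k v : R :=
  if (0 < v)%N && (v \notin p) then
    q ^+ free_below p v * (1 - q) *
    (if (v <= m)%N then gap_prob k else if v%:Z == m%:Z + a k then gap_prob k.+1 else 0)
  else 0.

(* Beyond the current maximum m, the only value that keeps the walk alive is
   m + a k, reached after a k - 1 further zeros. *)
Lemma sum_step_prob_above p m k : all (fun x => x <= m)%N p -> (k <= n)%N ->
  \sum_(m.+1 <= v < (m + absz (a k)).+1) step_prob p m k v = q ^+ free_below p m.+1 * gap_prob k.
Proof.
move=> p_le kn; have p_small v : (m < v)%N -> v \notin p.
  by move=> mv; apply/negP => /(allP p_le); rewrite leqNgt mv.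
have dead v : (m < v)%N -> v%:Z != m%:Z + a k -> step_prob p m k v = 0.
  by move=> mv vmk; rewrite /step_prob; case: ifP => // _; rewrite leqNgt mv /= ifN ?mulr0.
rewrite gap_probS // /geom_pmf; case: (ltrP 0 (a k)) => ak; last first.
  rewrite mul0r mulr0 big_nat_cond big1 // => v /andP [/andP [mv _] _].
  by apply: dead => //; apply/negP => /eqP; lia.
rewrite big_nat_recr /=; last by lia.
rewrite big_nat_cond big1 ?add0r => [|v /andP [/andP [mv vmk] _]]; last first.
  by apply: dead => //; apply/negP => /eqP; lia.
have v_gt0 : (0 < m + absz (a k))%N by lia.
have v_gtm : (m + absz (a k) <= m)%N = false by apply/negbTE; lia.
have v_eq : (m + absz (a k))%:Z == m%:Z + a k by apply/eqP; lia.
rewrite /step_prob v_gt0 p_small /=; last by lia.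
rewrite v_gtm v_eq (_ : (m + absz (a k))%N = m.+1 + (absz (a k)).-1)%N; last by lia.
by rewrite free_below_above // exprD (_ : 1 - (1 - q) = q); [ring|ring].
Qed.

Lemma sum_step_prob p m k : all (fun x => x <= m)%N p -> (k <= n)%N ->
  \sum_(v < (m + absz (a k)).+1) step_prob p m k v = gap_prob k.
Proof.
move=> p_le kn; rewrite -(big_mkord xpredT) (big_cat_nat _ (n := m.+1)) //=; last by lia.
have -> : \sum_(0 <= v < m.+1) step_prob p m k v = (1 - q ^+ free_below p m.+1) * gap_prob k.
  rewrite -sum_free_below mulr_suml; apply: eq_big_nat => v /andP [_].
  by rewrite ltnS /step_prob => ->; case: ifP; rewrite ?mul0r.
by rewrite sum_step_prob_above //; ring.
Qed.

Definition walk_event_law fuel := forall (p : seq nat) m k,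
  uniq p -> all (fun x => 0 < x <= m)%N p -> (k <= n.+1)%N ->
  (m + \sum_(k <= l < n.+1) absz (a l) < fuel + size p)%N ->
  P (walk_event fuel p m k) = (P (prefix_event p) * (gap_prob k)%:E)%E.

Lemma walk_step_event_prob fuel (p : seq nat) m k v : walk_event_law fuel ->
  uniq p -> all (fun x => 0 < x <= m)%N p -> (k <= n)%N ->
  (m + \sum_(k <= l < n.+1) absz (a l) < fuel.+1 + size p)%N ->
  P (walk_step_event fuel p m k v) = (P (prefix_event p) * (step_prob p m k v)%:E)%E.
Proof.
move=> walk_law p_uniq p_le kn budget; rewrite /walk_step_event /step_prob.
case: ifP => [/andP [v_gt0 vp]|_]; last by rewrite measure0 mule0.
have p_pos : all (fun x => 0 < x)%N p by apply: sub_all p_le => x /andP [].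
have pv_uniq : uniq (rcons p v) by rewrite rcons_uniq vp p_uniq.
rewrite EFinM muleA -prefix_event_rcons_prob //.
case: ifP => vm.
  by rewrite walk_law ?all_rcons ?v_gt0 ?vm ?size_rcons //=; lia.
case: ifP => [/eqP vmk|_]; last by rewrite measure0 mule0.
have kn1 : (k < n.+1)%N by lia.
rewrite big_ltn // in budget.
rewrite walk_law ?all_rcons ?v_gt0 ?leqnn ?size_rcons //=; try lia.
by apply: sub_all p_le => x /andP [-> /leq_trans]; apply; lia.
Qed.

Lemma walk_event_prob fuel : walk_event_law fuel.
Proof.
have uniq_size (p : seq nat) m : uniq p -> all (fun x => 0 < x <= m)%N p -> (size p <= m)%N.
  move=> p_uniq p_le; rewrite -(size_iota 1 m); apply: uniq_leq_size => // x /(allP p_le).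
  by rewrite mem_iota; lia.
elim: fuel => [|fuel IH] p m k p_uniq p_le kn budget; case: (ltnP n k) => nk.
- by rewrite walk_event_done // (_ : k = n.+1) ?/gap_prob ?big_geq ?mule1 //; lia.
- by have := uniq_size _ _ p_uniq p_le; lia.
- by rewrite walk_event_done // (_ : k = n.+1) ?/gap_prob ?big_geq ?mule1 //; lia.
have p_pos : all (fun x => 0 < x)%N p by apply: sub_all p_le => x /andP [].
rewrite walk_event_step // measure_bigsetU => [|v|]; first last.
- by apply/trivIsetP => u v _ _; exact: walk_step_event_disj.
- by apply: walk_step_event_measurable => // *; exact: walk_event_measurable.
rewrite (eq_bigr (fun v : 'I__ => P (prefix_event p) * (step_prob p m k v)%:E)%E); last first.
  by move=> v _; apply: walk_step_event_prob.
rewrite -[P (prefix_event p)]fineK ?fin_num_measure //; last exact: prefix_event_measurable.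
under eq_bigr => v _ do rewrite -EFinM.
rewrite sumEFin -mulr_sumr sum_step_prob //.
by apply: sub_all p_le => x /andP [].
Qed.

Lemma zero_tail_negligible (f : nat -> input_idx) : 0 <= q -> q < 1 ->
  injective f -> (forall j, input_valid (f j)) -> (forall j, input_law q (f j) 0 = q) ->
  P.-negligible [set w | forall j, input_val Bp Bm M (f j) w = 0%N].
Proof.
move=> q0 q1 f_inj f_ok f_law.
pose W := \bigcap_K cylinder (map f (iota 0 K)) (fun _ => 0%N).
have cyl_ok K : all input_valid (map f (iota 0 K)) by apply/allP => _ /mapP [j _ ->].
have W_meas : measurable W by apply: bigcapT_measurable => K; exact: cylinder_measurable.
have PW_le K : (P W <= (q ^+ K)%:E)%E.
  apply: (@le_trans _ _ (P (cylinder (map f (iota 0 K)) (fun _ => 0%N)))).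
    by apply: le_measure; rewrite ?inE //; [exact: cylinder_measurable|move=> w /(_ K I)].
  rewrite /cylinder Hind ?map_inj_uniq ?iota_uniq // big_map (eq_bigr (fun=> q)) //.
  by rewrite prodr_const_count count_predT size_iota.
exists W; split => //; last by move=> w wf K _; apply/in_cylinder => _ /mapP [j _ ->].
rewrite -[P W]fineK ?fin_num_measure //; congr EFin.
apply: le_expr_eq0 q0 q1 _ _ => [|K]; first exact: fine_ge0.
by rewrite -lee_fin fineK ?fin_num_measure.
Qed.

Lemma rows_unbounded_ae : 0 <= q -> q < 1 -> exists N0 : set T,
  [/\ measurable N0, P N0 = 0%E &
      forall w, ~ (rows_unbounded (Bw w) /\ rows_unbounded (fun i j => Bm i j w)) -> N0 w].
Proof.
move=> q0 q1.
pose tail (B : nat -> nat -> T -> bool) i N := [set w | forall j, (N < j)%N -> ~~ B i.+1 j w].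
have tail_negligible (g : nat * nat -> input_idx) (B : nat -> nat -> T -> bool) i N :
    injective g -> (forall ij, input_valid (g ij) = (0 < ij.1)%N && (0 < ij.2)%N) ->
    (forall ij, input_law q (g ij) 0 = q) ->
    (forall ij w, input_val Bp Bm M (g ij) w = B ij.1 ij.2 w) -> P.-negligible (tail B i N).
  move=> g_inj g_ok g_law g_val.
  apply: (negligibleS _ (zero_tail_negligible (f := fun j => g (i.+1, N.+1 + j)) q0 q1 _ _ _)).
  - by move=> w wB j; rewrite g_val /= (negbTE (wB _ _)) //; lia.
  - by move=> j j' /g_inj [/eqP]; rewrite eqn_add2l => /eqP.
  - by move=> j; rewrite g_ok.
  - by move=> j; apply: g_law.
have tailp i N : P.-negligible (tail Bp i N).
  by apply: (tail_negligible (fun ij => inl ij)) => [x y [->]|[]|[]|[] i' j' w].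
have tailm i N : P.-negligible (tail Bm i N).
  by apply: (tail_negligible (fun ij => inr (inl ij))) => [x y [->]|[]|[]|[] i' j' w].
have [N0 [N0_meas PN0 N0_sup]] : P.-negligible
    (\bigcup_i ((\bigcup_N tail Bp i N) `|` (\bigcup_N tail Bm i N))).
  by apply: negligible_bigcup => i; apply: negligibleU; apply: negligible_bigcup.
exists N0; split => // w /not_andP [] /not_rows_unbounded [i [N wtail]]; apply: N0_sup.
- by exists i => //; left; exists N.
- by exists i => //; right; exists N.
Qed.

End PrefixProbability.

Lemma null_sandwich (d : measure_display) (T : measurableType d) (R : realType)
    (mu : {measure set T -> \bar R}) (E N S : set T) :
  measurable E -> measurable N -> mu N = 0%E -> (forall w, ~ N w -> S w <-> E w) ->
  [/\ measurable (E `\` N), measurable (E `|` N), E `\` N `<=` S, S `<=` E `|` N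
    & mu (E `\` N) = mu E /\ mu (E `|` N) = mu E].
Proof.
move=> E_meas N_meas muN SE; split.
- exact: measurableD.
- exact: measurableU.
- by move=> w [Ew Nw]; apply/SE.
- by move=> w Sw; case: (pselect (N w)) => Nw; [right|left; apply/(SE w Nw)].
split; last exact: measureU0.
rewrite (measureDI mu E_meas N_meas).
by rewrite (subset_measure0 (measurableI _ _ E_meas N_meas) N_meas) ?adde0.
Qed.

Theorem corollary3p3 (R : realType) (d : measure_display) (T : measurableType d)
  (P : probability T R) (q : R) (hq0 : 0 <= q) (hq1 : q < 1)
  (Bp Bm : nat -> nat -> T -> bool) (M : nat -> T -> nat)
  (Hmeas : forall (x : input_idx) (v : nat), input_valid x ->
     measurable [set w | input_val Bp Bm M x w = v])
  (Hind : forall (s : seq input_idx) (v : input_idx -> nat),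
     uniq s -> all input_valid s ->
     P (\big[setI/setT]_(x <- s) [set w | input_val Bp Bm M x w = v x])
       = (\prod_(x <- s) input_law q x (v x))%:E) :
  forall (n : nat) (a : nat -> int),
    exists A B : set T,
      [/\ measurable A, measurable B,
          A `<=` [set w | forall i, (i <= n)%N -> record_gap (Xq Bp Bm M w) i = a i],
          [set w | forall i, (i <= n)%N -> record_gap (Xq Bp Bm M w) i = a i] `<=` B
        & P A = (\prod_(i < n.+1) geom_pmf (1 - q) (a i))%:E /\
          P B = (\prod_(i < n.+1) geom_pmf (1 - q) (a i))%:E].
Proof.
move=> n a.
pose E := walk_event Bp a n (gap_budget a n).+1 [::] 0 0.
have [N0 [N0_meas PN0 N0_bad]] := rows_unbounded_ae Hmeas Hind hq0 hq1.
have E_meas : measurable E by exact: (walk_event_measurable Hmeas).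
have PE : P E = (\prod_(i < n.+1) geom_pmf (1 - q) (a i))%:E.
  rewrite (walk_event_prob Hmeas Hind) //=; last by rewrite /gap_budget big_mkord; lia.
  by rewrite prefix_event_nil mul1e /gap_prob big_mkord.
have gapsE w : ~ N0 w ->
    (forall i, (i <= n)%N -> record_gap (Xq Bp Bm M w) i = a i) <-> E w.
  move=> /(contra_not (N0_bad w)) /contrapT [Bp_unb Bm_unb].
  by rewrite /Xq -record_walk_record_gap //; split => [|[]].
have [? ? ? ? [PD PU]] := null_sandwich E_meas N0_meas PN0 gapsE.
by exists (E `\` N0), (E `|` N0); split => //; split; [rewrite PD|rewrite PU]; exact: PE.
Qed.
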